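(* Let $\theta^*\in\mathbb{R}^n$, let $\phi:\mathbb{R}_{\ge0}\to\mathbb{R}^n$ be piecewise continuous and bounded, and $y^*(t):=\phi^T(t)\theta^*$. Let $t_1,\dots,t_N\ge0$ be such that $\mathcal{D}=[\phi(t_1),\dots,\phi(t_N)]$ has rank $n$. Let $\beta,\gamma,\mu>0$ with $\beta\ge2\gamma/\mu$, $\mathcal{N}_t:=1+\mu\phi^T(t)\phi(t)$, and $$B(\theta,\mu):=\sum_{k=1}^N\frac{\phi(t_k)}{1+\mu\phi^T(t_k)\phi(t_k)}\big(\phi^T(t_k)\theta-y^*(t_k)\big).$$ Then $(\theta^*,\theta^* )$ is uniformly globally asymptotically stable for the system in $(\theta,\vartheta)\in\mathbb{R}^{2n}$ $$\dot\theta=-\beta(\theta-\vartheta)\mathcal{N}_t,\qquad\dot\vartheta=-\gamma\Big(\phi(t)\big(\phi^T(t)\theta-y^*(t)\big)+\mathcal{N}_tB(\theta,\mu)\Big).$$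
   Context: No persistent excitation is assumed. For a system $\dot x=f(x,t)$ with equilibrium $x^*$: uniformly globally stable (UGS) means there is a class-$\mathcal{K}_\infty$ function $\kappa$ with $|x(t)-x^*|\le\kappa(|x_\circ-x^*|)$ for all $t\ge t_\circ$, for every solution from every $(x_\circ,t_\circ)$; uniformly globally attractive (UGA) means for each $r,\sigma>0$ there is $T'>0$ with $|x_\circ-x^*|\le r\Rightarrow|x(t)-x^*|\le\sigma$ for all $t\ge t_\circ+T'$, uniformly in $t_\circ\ge0$; UGAS means UGS and UGA. *)

From HB Require Import structures.
From mathcomp Require Import all_boot all_order all_algebra.
From mathcomp Require Import all_classical all_reals all_analysis.
Set Implicit Arguments. Unset Strict Implicit. Unset Printing Implicit Defensive.
Import Order.TTheory GRing.Theory Num.Theory.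
Import numFieldNormedType.Exports.
Local Open Scope classical_set_scope.
Local Open Scope ring_scope.

Section Defs.
Variable R : realType.

Definition dotv (n : nat) (u v : 'rV[R]_n) : R := \sum_(i < n) u 0 i * v 0 i.

Definition pw_continuous (V : normedModType R) (f : R -> V) : Prop :=
  forall b : R, exists s : seq R,
    (forall t, 0 < t -> t <= b -> t \notin s -> {for t, continuous f}) /\
    (forall t, t \in s -> 0 < t -> exists l : V, f x @[x --> t^'-] --> l) /\
    (forall t, (t \in s) || (t == 0) -> exists l : V, f x @[x --> t^'+] --> l).

Definition bounded_on_nonneg (V : normedModType R) (f : R -> V) : Prop :=
  exists M : R, forall t, 0 <= t -> `|f t| <= M.

(* (Carathéodory) solution on [t0, +oo) of x' = F t x: continuous on [t0,+oo)
   and differentiable with derivative F t (x t) except at finitely many points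
   of each bounded interval. *)
Definition is_solution (X : normedModType R) (F : R -> X -> X) (t0 : R)
    (x : R -> X) : Prop :=
  {within `[t0, +oo[, continuous x} /\
  forall b : R, exists s : seq R,
    forall t, t0 < t -> t < b -> t \notin s -> is_derive t 1 x (F t (x t)).

Definition class_Kinf (kappa : R -> R) : Prop :=
  {within `[0, +oo[, continuous kappa} /\ kappa 0 = 0 /\
  (forall r s, 0 <= r -> r < s -> kappa r < kappa s) /\
  (forall M : R, exists r, 0 <= r /\ M <= kappa r).

Definition UGS (X : normedModType R) (F : R -> X -> X) (xs : X) : Prop :=
  exists kappa : R -> R, class_Kinf kappa /\
    forall (t0 : R) (x : R -> X), 0 <= t0 -> is_solution F t0 x ->
      forall t, t0 <= t -> `|x t - xs| <= kappa `|x t0 - xs|.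

Definition UGA (X : normedModType R) (F : R -> X -> X) (xs : X) : Prop :=
  forall r sigma : R, 0 < r -> 0 < sigma -> exists T : R, 0 < T /\
    forall (t0 : R) (x : R -> X), 0 <= t0 -> is_solution F t0 x ->
      `|x t0 - xs| <= r -> forall t, t0 + T <= t -> `|x t - xs| <= sigma.

Definition UGAS (X : normedModType R) (F : R -> X -> X) (xs : X) : Prop :=
  UGS F xs /\ UGA F xs.

Variables (n N : nat).

Definition data_matrix (phi : R -> 'rV[R]_n) (tk : 'I_N -> R) : 'M[R]_(n, N) :=
  \matrix_(i < n, k < N) phi (tk k) 0 i.

Definition ystar (phi : R -> 'rV[R]_n) (ths : 'rV[R]_n) (t : R) : R :=
  dotv (phi t) ths.

Definition Nt (phi : R -> 'rV[R]_n) (mu t : R) : R :=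
  1 + mu * dotv (phi t) (phi t).

Definition Bfun (phi : R -> 'rV[R]_n) (tk : 'I_N -> R) (ths : 'rV[R]_n)
    (th : 'rV[R]_n) (mu : R) : 'rV[R]_n :=
  \sum_(k < N) ((1 + mu * dotv (phi (tk k)) (phi (tk k)))^-1 *
                 (dotv (phi (tk k)) th - ystar phi ths (tk k))) *: phi (tk k).

Definition sysF (phi : R -> 'rV[R]_n) (tk : 'I_N -> R) (ths : 'rV[R]_n)
    (beta gamma mu : R) (t : R) (x : 'rV[R]_n * 'rV[R]_n)
    : 'rV[R]_n * 'rV[R]_n :=
  let th := x.1 in let vth := x.2 in
  (- (beta * Nt phi mu t) *: (th - vth),
   - gamma *: ((dotv (phi t) th - ystar phi ths t) *: phi t
               + Nt phi mu t *: Bfun phi tk ths th mu)).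

End Defs.

(* With [a = theta - theta*] and [b = vartheta - theta*], the function
     V(a, b) = (|b|^2 + |a - b|^2) / (2 gamma) + S(a) / beta,
     S(a) = sum_k (phi_k . a)^2 / (1 + mu |phi_k|^2),
   is a strict Lyapunov function.  Along the flow its derivative is a quadratic form
   in which the gain condition [beta >= 2 gamma / mu] lets the damping term of the
   first equation dominate the cross term coming from the regressor [phi t], leaving
   V' <= - (|a - b|^2 / mu + S(a)).  The rank condition on the data matrix makes
   S coercive, so V' <= - kappa V, while V is squeezed between two multiples of
   |(a, b)|^2.  Hence V decays exponentially along every solution, uniformly in the
   initial time, with no excitation condition on [phi]. *)

From HB Require Import structures.
From mathcomp Require Import all_boot all_order all_algebra.
From mathcomp Require Import all_classical all_reals all_analysis.
From mathcomp Require Import ring lra.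
Import Order.TTheory GRing.Theory Num.Theory.
Import numFieldNormedType.Exports.
Set Implicit Arguments. Unset Strict Implicit.
Local Open Scope classical_set_scope.
Local Open Scope ring_scope.

Section DotProduct.
Variables (R : realType) (n : nat).
Implicit Types u v w : 'rV[R]_n.

Lemma dotvC u v : dotv u v = dotv v u.
Proof. by apply: eq_bigr => i _; rewrite mulrC. Qed.

Lemma dotv0l u : dotv 0 u = 0.
Proof. by rewrite /dotv big1 // => i _; rewrite mxE mul0r. Qed.

Lemma dotvDr u v w : dotv u (v + w) = dotv u v + dotv u w.
Proof. by rewrite /dotv -big_split; apply: eq_bigr => i _; rewrite mxE mulrDr. Qed.

Lemma dotvZr u v (c : R) : dotv u (c *: v) = c * dotv u v.
Proof. by rewrite /dotv mulr_sumr; apply: eq_bigr => i _; rewrite mxE mulrCA. Qed.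

Lemma dotvNr u v : dotv u (- v) = - dotv u v.
Proof. by rewrite -scaleN1r dotvZr mulN1r. Qed.

Lemma dotvBr u v w : dotv u (v - w) = dotv u v - dotv u w.
Proof. by rewrite dotvDr dotvNr. Qed.

Lemma dotvBl u v w : dotv (v - w) u = dotv v u - dotv w u.
Proof. by rewrite dotvC dotvBr !(dotvC u). Qed.

Lemma dotvZl u v (c : R) : dotv (c *: v) u = c * dotv v u.
Proof. by rewrite dotvC dotvZr dotvC. Qed.

Lemma dotv_sumr (I : Type) (r : seq I) (F : I -> 'rV[R]_n) u :
  dotv u (\sum_(i <- r) F i) = \sum_(i <- r) dotv u (F i).
Proof.
elim: r => [|a r IH]; last by rewrite !big_cons dotvDr IH.
by rewrite !big_nil dotvC dotv0l.
Qed.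

Lemma dotvvE u : dotv u u = \sum_i u 0 i ^+ 2.
Proof. by apply: eq_bigr => i _; rewrite expr2. Qed.

Lemma dotvv_ge0 u : 0 <= dotv u u.
Proof. by rewrite dotvvE; apply: sumr_ge0 => i _; rewrite sqr_ge0. Qed.

Lemma sqr_norm_le_dotvv u : `|u| ^+ 2 <= dotv u u.
Proof.
have -> : `|u| = mx_norm u by [].
have [->|/mx_norm_neq0 [[a i] ->]] := eqVneq (mx_norm u) 0.
  by rewrite expr0n /= dotvv_ge0.
rewrite /= (ord1 a) real_normK ?num_real //.
by rewrite dotvvE (bigD1 i) //= lerDl; apply: sumr_ge0 => j _; rewrite sqr_ge0.
Qed.

Lemma dotvv_le_sqr_norm u : dotv u u <= n%:R * `|u| ^+ 2.
Proof.
rewrite dotvvE -[n in n%:R]card_ord -sumr_const mulr_suml.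
apply: ler_sum => i _; rewrite mul1r.
rewrite -real_normK ?num_real // lerXn2r ?nnegrE ?normr_ge0 //.
rewrite [leRHS]/Num.Def.normr /= mx_normrE.
exact: (le_bigmax _ _ (0, i)).
Qed.

Lemma dotv_parallelogram_le u v : dotv v v <= 2 * dotv u u + 2 * dotv (u - v) (u - v).
Proof.
have := dotvv_ge0 (2%:R *: u - v).
rewrite !dotvBr !dotvBl !dotvZr !dotvZl (dotvC v u); nra.
Qed.

End DotProduct.

Section CauchySchwarz.
Variable R : realType.

Lemma cauchy_schwarz_sum (m : nat) (u v : 'I_m -> R) :
  (\sum_i u i * v i) ^+ 2 <= (\sum_i u i ^+ 2) * (\sum_i v i ^+ 2).
Proof.
set A := \sum_i u i ^+ 2; set B := \sum_i u i * v i; set C := \sum_i v i ^+ 2.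
have A_ge0 : 0 <= A by apply: sumr_ge0 => i _; rewrite sqr_ge0.
have key : A * (A * C - B ^+ 2) = \sum_i (A * v i - B * u i) ^+ 2.
  transitivity (\sum_i (A ^+ 2 * v i ^+ 2 - (2 * A * B) * (u i * v i) + B ^+ 2 * u i ^+ 2)).
    by rewrite !big_split /= sumrN -!mulr_sumr -/A -/B -/C; ring.
  by apply: eq_bigr => i _; ring.
have [A0|A_neq0] := eqVneq A 0; last first.
  have A_gt0 : 0 < A by rewrite lt_def A_neq0.
  rewrite -subr_ge0 -(pmulr_rge0 _ A_gt0) key.
  by apply: sumr_ge0 => i _; rewrite sqr_ge0.
have u0 i : u i = 0.
  apply/eqP; rewrite -sqrf_eq0; apply/eqP.
  by move: A0 => /psumr_eq0P -> // j _; rewrite sqr_ge0.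
by rewrite /B big1 ?expr0n /= ?A0 ?mul0r // => i _; rewrite u0 mul0r.
Qed.

Lemma cauchy_schwarz_dotv (n : nat) (u v : 'rV[R]_n) :
  dotv u v ^+ 2 <= dotv u u * dotv v v.
Proof. by rewrite !dotvvE; exact: cauchy_schwarz_sum. Qed.

Lemma row_free_coercive (m p : nat) (D : 'M[R]_(m, p)) : row_free D ->
  exists2 K, 0 < K & forall a : 'rV_m, dotv a a <= K * dotv (a *m D) (a *m D).
Proof.
move=> /row_freeP [B DB1].
set K := \sum_i \sum_k B k i ^+ 2.
have K_ge0 : 0 <= K by do 2!apply: sumr_ge0 => ? _; rewrite sqr_ge0.
exists (K + 1); first by rewrite ltr_pwDr.
move=> a; set y := a *m D.
have -> : a = y *m B by rewrite -mulmxA DB1 mulmx1.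
rewrite mulrDl mul1r -[leLHS]addr0 lerD ?dotvv_ge0 //.
rewrite dotvvE /K mulr_suml; apply: ler_sum => i _.
by rewrite mxE dotvvE; under eq_bigr do rewrite mulrC; exact: cauchy_schwarz_sum.
Qed.

End CauchySchwarz.

Section Differentiation.
Variable R : realType.

Lemma is_derive_comp_linear (X Y : normedModType R) (L : X -> Y) (f : R -> X)
    (t : R) (df : X) :
  continuous L -> (forall (c : R) a b, L (c *: (a - b)) = c *: (L a - L b)) ->
  is_derive t 1 f df -> is_derive t 1 (fun s => L (f s)) (L df).
Proof.
move=> L_cont L_lin [f_ex dfE].
have f_cvg : (fun h : R => h^-1 *: ((f \o shift t) (h *: 1) - f t)) @ 0^' --> df.
  by rewrite -dfE; exact: f_ex.
have Lf_cvg : (fun h : R => h^-1 *: (((fun s => L (f s)) \o shift t) (h *: 1) - L (f t)))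
    @ 0^' --> L df.
  have -> : (fun h : R => h^-1 *: (((fun s => L (f s)) \o shift t) (h *: 1) - L (f t)))
      = L \o (fun h : R => h^-1 *: ((f \o shift t) (h *: 1) - f t)).
    by apply: funext => h /=; rewrite L_lin.
  exact: cvg_comp f_cvg (L_cont df).
by split; [apply/cvg_ex; exists (L df) | exact: cvg_lim].
Qed.

Lemma is_derive_fst (X Y : normedModType R) (f : R -> X * Y) (t : R) (df : X * Y) :
  is_derive t 1 f df -> is_derive t 1 (fun s => (f s).1) df.1.
Proof. by apply: is_derive_comp_linear => // p; exact: cvg_fst. Qed.

Lemma is_derive_snd (X Y : normedModType R) (f : R -> X * Y) (t : R) (df : X * Y) :
  is_derive t 1 f df -> is_derive t 1 (fun s => (f s).2) df.2.
Proof. by apply: is_derive_comp_linear => // p; exact: cvg_snd. Qed.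

Lemma is_derive_dotv (n : nat) (f g : R -> 'rV[R]_n) (t : R) df dg :
  is_derive t 1 f df -> is_derive t 1 g dg ->
  is_derive t 1 (fun s => dotv (f s) (g s)) (dotv df (g t) + dotv (f t) dg).
Proof.
move=> f_der g_der.
have coord_der (h : R -> 'rV[R]_n) dh i : is_derive t 1 h dh -> is_derive t 1 (fun s => h s 0 i) (dh 0 i).
  apply: (@is_derive_comp_linear _ _ (fun M : 'rV[R]_n => M 0 i)).
    exact: coord_continuous.
  by move=> c a b; rewrite !mxE.
rewrite -big_split /=; under eq_bigr do rewrite addrC [df 0 _ * _]mulrC.
rewrite /dotv -fct_sumE; apply: is_derive_sum => i.
exact: is_deriveM (coord_der _ _ i f_der) (coord_der _ _ i g_der).
Qed.

Lemma continuous_sumr (T : topologicalType) (m : nat) (f : 'I_m -> T -> R) x :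
  (forall i, {for x, continuous (f i)}) ->
  {for x, continuous (fun y => \sum_i f i y)}.
Proof.
move=> f_cont; rewrite -fct_sumE; elim/big_ind: _ => //.
- exact: cst_continuous.
- by move=> g h g_cont h_cont; exact: continuousD.
Qed.

Lemma continuous_dotv (T : topologicalType) (n : nat) (f g : T -> 'rV[R]_n) x :
  {for x, continuous f} -> {for x, continuous g} ->
  {for x, continuous (fun s => dotv (f s) (g s))}.
Proof.
move=> f_cont g_cont; apply: continuous_sumr => i.
apply: (@continuousM _ _ (fun s => f s 0 i) (fun s => g s 0 i)).
  exact: continuous_comp f_cont (@coord_continuous _ 1 n 0 i (f x)).
exact: continuous_comp g_cont (@coord_continuous _ 1 n 0 i (g x)).
Qed.

Lemma nonincreasing_except_finite (g : R -> R) (s : seq R) (a b : R) : a <= b ->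
  {within `[a, b], continuous g} ->
  (forall t, a < t -> t < b -> t \notin s ->
     exists2 dg, is_derive t 1 g dg & dg <= 0) ->
  g b <= g a.
Proof.
elim: s a b => [|p s IH] a b ab g_cont g_der.
  have derI t : t \in `]a, b[ -> exists2 dg, is_derive t 1 g dg & dg <= 0.
    by rewrite in_itv /= => /andP [a_lt lt_b]; exact: g_der.
  apply: (ler0_derive1_le_cc _ _ g_cont); rewrite ?in_itv /= ?lexx ?ab //.
    by move=> t /derI [dg [] ].
  by move=> t /derI [dg g_t dg_le0]; rewrite derive1E derive_val.
have cont_sub c d : a <= c -> d <= b -> {within `[c, d], continuous g}.
  by move=> ac db; apply: continuous_subspaceW g_cont; apply: subset_itv; rewrite bnd_simp.
have [/andP [ap pb]|p_out] := boolP ((a < p) && (p < b)).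
  apply: (@le_trans _ _ (g p)).
    apply: IH (ltW pb) (cont_sub _ _ (ltW ap) (lexx b)) _ => t pt lt_b ts.
    apply: g_der (lt_trans ap pt) lt_b _.
    by rewrite in_cons negb_or ts andbT gt_eqF.
  apply: IH (ltW ap) (cont_sub _ _ (lexx a) (ltW pb)) _ => t a_lt tp ts.
  apply: g_der a_lt (lt_trans tp pb) _.
  by rewrite in_cons negb_or ts andbT lt_eqF.
apply: IH => // t a_lt lt_b ts; apply: g_der => //.
rewrite in_cons negb_or ts andbT; apply: contraNneq p_out => <-.
by rewrite a_lt lt_b.
Qed.

End Differentiation.

Section QuadraticLyapunov.
Variables (R : realType) (X : normedModType R) (F : R -> X -> X) (xs : X).
Variables (V : X -> R) (c1 c2 k : R).
Hypotheses (c1_gt0 : 0 < c1) (c2_ge0 : 0 <= c2) (k_gt0 : 0 < k).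
Hypothesis V_cont : continuous V.
Hypothesis V_ge : forall p, c1 * `|p - xs| ^+ 2 <= V p.
Hypothesis V_le : forall p, V p <= c2 * `|p - xs| ^+ 2.
Hypothesis V_dissipative : forall (t : R) (x : R -> X), is_derive t 1 x (F t (x t)) ->
  exists2 dV, is_derive t 1 (fun s => V (x s)) dV & dV <= - k * V (x t).

Lemma Lyapunov_exp_decay t0 x : is_solution F t0 x ->
  forall t, t0 <= t -> V (x t) <= expR (- k * (t - t0)) * V (x t0).
Proof.
move=> [x_cont x_der] t t0t; have [s s_der] := x_der (t + 1).
set g := fun r => expR (k * r) * V (x r).
suff g_le : g t <= g t0.
  rewrite -(ler_pM2l (expR_gt0 (k * t))) mulrA -expRD.
  by have -> : k * t + - k * (t - t0) = k * t0 by ring.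
apply: (@nonincreasing_except_finite _ g s _ _ t0t).
  have exp_cont : {within `[t0, t], continuous (fun r => expR (k * r))}.
    apply: continuous_subspaceT => r.
    exact: continuous_comp (@mulrl_continuous _ k r) (@continuous_expR _ _).
  have Vx_cont : {within `[t0, t], continuous (fun r => V (x r))}.
    have sub : `[t0, t] `<=` `[t0, +oo[.
      by move=> u /=; rewrite !in_itv /= andbT => /andP [].
    have x_cont' := continuous_subspaceW sub x_cont.
    by move=> r; exact: continuous_comp (x_cont' r) (@V_cont (x r)).
  by move=> r; exact: continuousM (exp_cont r) (Vx_cont r).
move=> r t0r rt rs.
have r_lt : r < t + 1 by rewrite (lt_trans rt) ?ltrDl.
have [dV dV_der dV_le] := V_dissipative (s_der r t0r r_lt rs).
have lin_der : is_derive r 1 (fun u => k * u) k.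
  exact: is_derive_eq (is_deriveZ k (is_derive_id r 1)) (mulr1 k).
have exp_der : is_derive r 1 (fun u => expR (k * u)) (expR (k * r) * k).
  exact: is_derive1_comp (is_derive_expR (k * r)) lin_der.
exists (expR (k * r) * dV + V (x r) * (expR (k * r) * k)).
  exact: is_deriveM.
have := expR_gt0 (k * r); nra.
Qed.

Lemma Lyapunov_sqr_norm_decay t0 x : is_solution F t0 x -> forall t, t0 <= t ->
  c1 * `|x t - xs| ^+ 2 <= expR (- k * (t - t0)) * (c2 * `|x t0 - xs| ^+ 2).
Proof.
move=> x_sol t t0t; apply: le_trans (V_ge _) _.
apply: le_trans (Lyapunov_exp_decay x_sol t0t) _.
by rewrite ler_wpM2l ?(ltW (expR_gt0 _)).
Qed.

Lemma quadratic_Lyapunov_UGS : UGS F xs.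
Proof.
(* [K >= 1], so [K ^+ 2] dominates [c2 / c1] without taking square roots. *)
set K := c2 / c1 + 1.
have K_ge1 : 1 <= K by rewrite lerDr divr_ge0 // ltW.
have K_gt0 : 0 < K := lt_le_trans ltr01 K_ge1.
exists (fun r => K * r); split.
  split; first by apply: continuous_subspaceT => r; exact: mulrl_continuous.
  split; first by rewrite mulr0.
  split; first by move=> r s _ rs; rewrite ltr_pM2l.
  move=> M; exists (`|M| / K); split; first by rewrite divr_ge0 // ltW.
  by rewrite mulrC divfK ?gt_eqF ?ler_norm.
move=> t0 x _ x_sol t t0t.
have c1K : c1 * K = c2 + c1 by rewrite /K mulrDr mulr1 mulrCA divff ?gt_eqF // mulr1.
have c2_le : c2 <= c1 * K ^+ 2.
  rewrite expr2 mulrA c1K; apply: (@le_trans _ _ (c2 + c1)); first by rewrite lerDl ltW.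
  by rewrite ler_peMr // addr_ge0 // ltW.
have exp_le1 : expR (- k * (t - t0)) <= 1.
  by rewrite expR_le1 mulNr oppr_le0 mulr_ge0 ?subr_ge0 // ltW.
suff : `|x t - xs| ^+ 2 <= (K * `|x t0 - xs|) ^+ 2.
  by rewrite ler_sqr ?nnegrE ?mulr_ge0 ?normr_ge0 // ltW.
rewrite exprMn -(ler_pM2l c1_gt0).
apply: le_trans (Lyapunov_sqr_norm_decay x_sol t0t) _.
rewrite mulrA [in leRHS]mulrA; apply: le_trans (ler_wpM2r (sqr_ge0 _) c2_le).
by rewrite ler_wpM2r ?sqr_ge0 // ler_piMl.
Qed.

Lemma quadratic_Lyapunov_UGA : UGA F xs.
Proof.
move=> r sigma r_gt0 sigma_gt0.
set T := c2 * r ^+ 2 / (c1 * sigma ^+ 2 * k).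
have T_ge0 : 0 <= T by rewrite divr_ge0 ?mulr_ge0 ?sqr_ge0 // ltW.
exists (T + 1); split; first exact: ltr_wpDl T_ge0 ltr01.
move=> t0 x _ x_sol x0_le t Tt.
have t0t : t0 <= t by move: Tt; rewrite addrA; lra.
have r_bound : c2 * r ^+ 2 <= c1 * sigma ^+ 2 * expR (k * (t - t0)).
  have -> : c2 * r ^+ 2 = c1 * sigma ^+ 2 * (k * T).
    by rewrite /T mulrA [RHS]mulrC divfK // !mulf_neq0 ?gt_eqF ?exprn_gt0.
  apply: ler_wpM2l; first by rewrite mulr_ge0 ?sqr_ge0 // ltW.
  apply: le_trans _ (expR_ge1Dx _).
  have : T <= t - t0 by move: Tt; rewrite addrA; lra.
  by move=> /(ler_wpM2l (ltW k_gt0)); lra.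
suff : `|x t - xs| ^+ 2 <= sigma ^+ 2.
  by rewrite ler_sqr ?nnegrE ?normr_ge0 // ltW.
rewrite -(ler_pM2l c1_gt0); apply: le_trans (Lyapunov_sqr_norm_decay x_sol t0t) _.
rewrite mulNr expRN ler_pdivrMl ?expR_gt0 // [leRHS]mulrC.
by apply: le_trans r_bound; rewrite ler_wpM2l // lerXn2r ?nnegrE ?normr_ge0 ?(ltW r_gt0).
Qed.

Lemma quadratic_Lyapunov_UGAS : UGAS F xs.
Proof. by split; [exact: quadratic_Lyapunov_UGS | exact: quadratic_Lyapunov_UGA]. Qed.

End QuadraticLyapunov.

Section ConcurrentLearningLyapunov.
Variables (R : realType) (n N : nat) (ths : 'rV[R]_n) (phi : R -> 'rV[R]_n).
Variables (tk : 'I_N -> R) (beta gamma mu : R).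
Hypotheses (beta_gt0 : 0 < beta) (gamma_gt0 : 0 < gamma) (mu_gt0 : 0 < mu).

Local Notation phk k := (phi (tk k)).

Definition weight (k : 'I_N) : R := (1 + mu * dotv (phk k) (phk k))^-1.

Definition data_form (a : 'rV[R]_n) : R := \sum_k weight k * dotv (phk k) a ^+ 2.

Lemma weight_gt0 k : 0 < weight k.
Proof. by rewrite invr_gt0 ltr_pwDl // mulr_ge0 ?dotvv_ge0 // ltW. Qed.

Lemma data_form_ge0 a : 0 <= data_form a.
Proof. by apply: sumr_ge0 => k _; rewrite mulr_ge0 ?sqr_ge0 // ltW ?weight_gt0. Qed.

Lemma weight_le1 k : weight k <= 1.
Proof. by rewrite invf_le1 ?lerDl ?mulr_ge0 ?dotvv_ge0 // ?ltW // -invr_gt0 weight_gt0. Qed.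

Definition Lyap (a b : 'rV[R]_n) : R :=
  (2 * gamma)^-1 * (dotv b b + dotv (a - b) (a - b)) + beta^-1 * data_form a.

Definition Lyap_dot (a b da db : 'rV[R]_n) : R :=
  gamma^-1 * (dotv b db + dotv (a - b) (da - db)) +
  2 * beta^-1 * \sum_k weight k * (dotv (phk k) a * dotv (phk k) da).

Lemma is_derive_Lyap (a b : R -> 'rV[R]_n) (t : R) da db :
  is_derive t 1 a da -> is_derive t 1 b db ->
  is_derive t 1 (fun s => Lyap (a s) (b s)) (Lyap_dot (a t) (b t) da db).
Proof.
move=> a_der b_der; have e_der := is_deriveB a_der b_der.
have phia_der k : is_derive t 1 (fun s => dotv (phk k) (a s)) (dotv (phk k) da).
  by apply: is_derive_eq (is_derive_dotv (is_derive_cst (phk k) t 1) a_der) _; rewrite dotv0l add0r.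
apply: is_derive_eq.
  apply: is_deriveD; apply: is_deriveZ.
    exact: is_deriveD (is_derive_dotv b_der b_der) (is_derive_dotv e_der e_der).
  (* the squares are differentiated by the [is_deriveX] instance, from [phia_der] *)
  rewrite /data_form -fct_sumE; apply: is_derive_sum => k; apply: is_deriveZ.
have -> : (a - b) t = a t - b t by [].
rewrite /Lyap_dot /GRing.scale /= (dotvC db) (dotvC (da - db)) !mulr_sumr.
congr (_ + _); first by field; rewrite gt_eqF.
by apply: eq_bigr => k _; field; rewrite gt_eqF.
Qed.

Local Notation F := (sysF phi tk ths beta gamma mu).

Lemma Lyap_dot_sysFE t th vth :
  Lyap_dot (th - ths) (vth - ths) (F t (th, vth)).1 (F t (th, vth)).2 =
  dotv (phi t) (th - ths) ^+ 2
  - 2 * dotv (phi t) (th - ths) * dotv (phi t) (vth - ths)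
  - Nt phi mu t * data_form (th - ths)
  - beta / gamma * Nt phi mu t * dotv (th - vth) (th - vth).
Proof.
set a := th - ths; set b := vth - ths; set p := phi t; set Nt0 := Nt phi mu t.
set B := Bfun phi tk ths th mu.
have e_eq : th - vth = a - b by rewrite /a /b opprB addrA subrK.
have res_eq : dotv p th - ystar phi ths t = dotv p a by rewrite /ystar dotvBr.
have dotB y : dotv y B = \sum_k weight k * dotv (phk k) a * dotv (phk k) y.
  rewrite dotv_sumr; apply: eq_bigr => k _.
  by rewrite /ystar -dotvBr dotvZr (dotvC y).
have Ba : dotv a B = data_form a by rewrite dotB; apply: eq_bigr => k _; rewrite -mulrA expr2.
have sum_eq : \sum_k weight k * (dotv (phk k) a * dotv (phk k) (F t (th, vth)).1)
    = - (beta * Nt0) * (data_form a - dotv b B).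
  rewrite /= e_eq /data_form dotB -sumrB mulr_sumr; apply: eq_bigr => k _.
  by rewrite dotvZr [dotv _ (a - b)]dotvBr -/Nt0; ring.
rewrite /Lyap_dot sum_eq /= e_eq res_eq -/B -/Nt0 -/p.
clearbody a b p B Nt0.
rewrite !(dotvZr, dotvDr, dotvBr, dotvBl, dotvNr) Ba (dotvC a p) (dotvC b p) (dotvC b a).
by field; rewrite !gt_eqF.
Qed.

Lemma sqr_norm_le_Lyap a b : (4 * gamma)^-1 * `|(a, b)| ^+ 2 <= Lyap a b.
Proof.
have b_le := sqr_norm_le_dotvv b; have e_le := sqr_norm_le_dotvv (a - b).
have a_le : `|a| ^+ 2 <= 2 * (dotv b b + dotv (a - b) (a - b)).
  have a_tri : `|a| ^+ 2 <= (`|a - b| + `|b|) ^+ 2.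
    by rewrite lerXn2r ?nnegrE ?addr_ge0 // -{1}(subrK b a) ler_normD.
  have := sqr_ge0 (`|a - b| - `|b|); rewrite sqrrB sqrrD in a_tri *; lra.
apply: le_trans (_ : (2 * gamma)^-1 * (dotv b b + dotv (a - b) (a - b)) <= _); last first.
  by rewrite lerDl mulr_ge0 ?data_form_ge0 // invr_ge0 ltW.
rewrite [(2 * gamma)^-1](_ : _ = (4 * gamma)^-1 * 2); last by field; rewrite gt_eqF.
rewrite -mulrA; apply: ler_wpM2l; first by rewrite invr_ge0 mulr_ge0 // ltW.
rewrite prod_normE /=; case: (leP `|a| `|b|) => _ //.
have := dotvv_ge0 (a - b); have := dotvv_ge0 b; lra.
Qed.

Lemma Lyap_le_sqr_norm :
  exists2 c, 0 <= c & forall a b, Lyap a b <= c * `|(a, b)| ^+ 2.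
Proof.
set Phi := \sum_k dotv (phk k) (phk k).
have Phi_ge0 : 0 <= Phi by apply: sumr_ge0 => k _; exact: dotvv_ge0.
exists ((2 * gamma)^-1 * (5 * n%:R) + beta^-1 * (Phi * n%:R)).
  by rewrite addr_ge0 // mulr_ge0 ?invr_ge0 ?mulr_ge0 // ltW.
move=> a b; set m := `|(a, b)|.
have sqr_le (u : 'rV[R]_n) r : `|u| <= r -> dotv u u <= n%:R * r ^+ 2.
  move=> um; apply: le_trans (dotvv_le_sqr_norm u) _.
  by apply: ler_wpM2l => //; rewrite lerXn2r ?nnegrE // (le_trans _ um).
have [a_le b_le] : `|a| <= m /\ `|b| <= m by rewrite /m prod_normE /= !le_max !lexx orbT.
have e_le : dotv (a - b) (a - b) <= n%:R * (2 * m) ^+ 2.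
  apply: sqr_le; apply: le_trans (ler_normB _ _) _.
  by rewrite mulr2n mulrDl mul1r lerD.
have S_le : data_form a <= Phi * (n%:R * m ^+ 2).
  rewrite /Phi mulr_suml; apply: ler_sum => k _.
  apply: le_trans (ler_piMl (sqr_ge0 _) (weight_le1 k)) _.
  apply: le_trans (cauchy_schwarz_dotv _ _) _.
  by apply: ler_wpM2l; [exact: dotvv_ge0 | exact: sqr_le].
rewrite /Lyap (mulrDl _ _ (m ^+ 2)); apply: lerD; rewrite -mulrA; apply: ler_wpM2l.
- by rewrite invr_ge0 mulr_ge0 // ltW.
- have := sqr_le _ _ b_le; have := sqr_ge0 m; move: e_le; rewrite exprMn; nra.
- by rewrite invr_ge0 ltW.
- by rewrite -mulrA.
Qed.

Lemma continuous_Lyap (T : topologicalType) (u v : T -> 'rV[R]_n) x :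
  {for x, continuous u} -> {for x, continuous v} ->
  {for x, continuous (fun y => Lyap (u y) (v y))}.
Proof.
move=> u_cont v_cont.
have cst_mul c (f : T -> R) : {for x, continuous f} -> {for x, continuous (fun y => c * f y)}.
  by move=> f_cont; apply: continuousM f_cont; exact: cst_continuous.
have e_cont := continuousB u_cont v_cont.
have phiu_cont k : {for x, continuous (fun y => dotv (phk k) (u y))}.
  by apply: continuous_dotv => //; exact: cst_continuous.
rewrite /Lyap; apply: (@continuousD _ _ _ (fun y => _) (fun y => _)); apply: (cst_mul).
  by apply: continuousD; apply: continuous_dotv.
apply: continuous_sumr => k; apply: (cst_mul).
exact: (continuousM (phiu_cont k) (phiu_cont k)).
Qed.

Definition Lyap_state (p : 'rV[R]_n * 'rV[R]_n) : R := Lyap (p.1 - ths) (p.2 - ths).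

Lemma continuous_Lyap_state : continuous Lyap_state.
Proof.
move=> p.
have a_cont : {for p, continuous (fun q : 'rV[R]_n * 'rV[R]_n => q.1 - ths)}.
  by apply: (@continuousB _ _ _ fst (fun=> ths)); [exact: cvg_fst | exact: cst_continuous].
have b_cont : {for p, continuous (fun q : 'rV[R]_n * 'rV[R]_n => q.2 - ths)}.
  by apply: (@continuousB _ _ _ snd (fun=> ths)); [exact: cvg_snd | exact: cst_continuous].
exact: (continuous_Lyap a_cont b_cont).
Qed.

Lemma is_derive_Lyap_state (x : R -> 'rV[R]_n * 'rV[R]_n) (t : R) dx :
  is_derive t 1 x dx -> is_derive t 1 (fun s => Lyap_state (x s))
    (Lyap_dot ((x t).1 - ths) ((x t).2 - ths) dx.1 dx.2).
Proof.
move=> x_der; have shift_der (f : R -> 'rV[R]_n) df :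
    is_derive t 1 f df -> is_derive t 1 (fun s => f s - ths) df.
  by move=> f_der; apply: is_derive_eq (is_deriveB f_der (is_derive_cst ths t 1)) _; rewrite subr0.
exact: is_derive_Lyap (shift_der _ _ (is_derive_fst x_der)) (shift_der _ _ (is_derive_snd x_der)).
Qed.

Lemma data_form_coercive : \rank (data_matrix phi tk) = n ->
  exists2 K, 0 < K & forall a, dotv a a <= K * data_form a.
Proof.
move=> rk; have D_free : row_free (data_matrix phi tk) by rewrite /row_free rk.
have [K0 K0_gt0 D_coercive] := row_free_coercive D_free.
set Phi := \sum_k dotv (phk k) (phk k).
have Phi_ge0 : 0 <= Phi by apply: sumr_ge0 => k _; exact: dotvv_ge0.
exists (K0 * (1 + mu * Phi)); first by rewrite mulr_gt0 // ltr_pwDl // mulr_ge0 // ltW.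
move=> a; apply: le_trans (D_coercive a) _; rewrite -mulrA.
apply: ler_wpM2l; first exact: ltW.
rewrite dotvvE /data_form mulr_sumr; apply: ler_sum => k _.
have -> : (a *m data_matrix phi tk) 0 k = dotv (phk k) a.
  by rewrite mxE dotvC; apply: eq_bigr => i _; rewrite mxE.
have weightK : (1 + mu * dotv (phk k) (phk k)) * weight k = 1.
  by rewrite mulfV // -invr_eq0 gt_eqF ?weight_gt0.
rewrite [leLHS](_ : _ = (1 + mu * dotv (phk k) (phk k)) * (weight k * dotv (phk k) a ^+ 2)).
  apply: ler_wpM2r; first by rewrite mulr_ge0 ?sqr_ge0 // ltW ?weight_gt0.
  rewrite lerD2l ler_wpM2l ?(ltW mu_gt0) //.
  by rewrite /Phi (bigD1 k) //= lerDl sumr_ge0 // => j _; exact: dotvv_ge0.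
by rewrite mulrA weightK mul1r.
Qed.

Lemma Lyap_le_dissipation K : 0 <= K -> (forall a, dotv a a <= K * data_form a) ->
  forall a b, Lyap a b <= (3 * mu / (2 * gamma) + K / gamma + beta^-1) *
                          (mu^-1 * dotv (a - b) (a - b) + data_form a).
Proof.
move=> K_ge0 K_coercive a b.
set E := dotv (a - b) (a - b); set S := data_form a.
have E_ge0 : 0 <= E := dotvv_ge0 (a - b).
have S_ge0 : 0 <= S := data_form_ge0 a.
have L_le : Lyap a b <= (2 * gamma)^-1 * (2 * (K * S) + 3 * E) + beta^-1 * S.
  rewrite lerD2r; apply: ler_wpM2l; first by rewrite invr_ge0 mulr_ge0 // ltW.
  by have := dotv_parallelogram_le a b; have := K_coercive a; rewrite -/S -/E; lra.
apply: le_trans L_le _.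
have -> : (3 * mu / (2 * gamma) + K / gamma + beta^-1) * (mu^-1 * E + S) =
    (2 * gamma)^-1 * (2 * (K * S) + 3 * E) + beta^-1 * S +
    (3 * mu / (2 * gamma) * S + (K / gamma + beta^-1) * mu^-1 * E).
  by field; rewrite !gt_eqF.
have [g_ge0 m_ge0 b_ge0] := And3 (ltW gamma_gt0) (ltW mu_gt0) (ltW beta_gt0).
by rewrite lerDl addr_ge0 // !mulr_ge0 ?invr_ge0 ?addr_ge0 ?divr_ge0 ?mulr_ge0 ?ler01 // invr_ge0.
Qed.

Hypothesis gain : 2 * gamma / mu <= beta.

Lemma Lyap_dot_sysF_le t th vth :
  Lyap_dot (th - ths) (vth - ths) (F t (th, vth)).1 (F t (th, vth)).2
  <= - (mu^-1 * dotv (th - vth) (th - vth) + data_form (th - ths)).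
Proof.
(* [pa ^+ 2 - 2 pa pb <= (pa - pb) ^+ 2 <= P * E] by Cauchy-Schwarz, and the gain
   condition gives [beta / gamma * Nt0 >= 2 / mu + 2 * P]. *)
rewrite Lyap_dot_sysFE.
set pa := dotv (phi t) (th - ths); set pb := dotv (phi t) (vth - ths).
set E := dotv (th - vth) (th - vth); set P := dotv (phi t) (phi t).
set X := data_form (th - ths); set Nt0 := Nt phi mu t.
have Nt0E : Nt0 = 1 + mu * P by [].
have P_ge0 : 0 <= P := dotvv_ge0 (phi t).
have E_ge0 : 0 <= E := dotvv_ge0 (th - vth).
have X_ge0 : 0 <= X := data_form_ge0 (th - ths).
have cs : (pa - pb) ^+ 2 <= P * E.
  have -> : pa - pb = dotv (phi t) (th - vth).
    by rewrite -dotvBr opprB addrA subrK.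
  exact: cauchy_schwarz_dotv.
have gain' : 2 / mu * Nt0 * E <= beta / gamma * Nt0 * E.
  apply: ler_wpM2r => //; apply: ler_wpM2r; first by rewrite Nt0E addr_ge0 // mulr_ge0 // ltW.
  by rewrite ler_pdivlMr // mulrAC.
have splitE : 2 / mu * Nt0 * E = 2 / mu * E + 2 * P * E.
  by rewrite Nt0E; field; rewrite gt_eqF.
have X_le : X <= Nt0 * X by rewrite ler_peMl // Nt0E lerDl mulr_ge0 // ltW.
have E_mu : 0 <= mu^-1 * E by rewrite mulr_ge0 // invr_ge0 ltW.
nra.
Qed.

Lemma sysF_UGAS : \rank (data_matrix phi tk) = n -> UGAS F (ths, ths).
Proof.
move=> rk; have [K K_gt0 K_coercive] := data_form_coercive rk.
have [c2 c2_ge0 Lyap_le] := Lyap_le_sqr_norm.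
set c := 3 * mu / (2 * gamma) + K / gamma + beta^-1.
have c_gt0 : 0 < c.
  by rewrite ltr_wpDl ?invr_gt0 // addr_ge0 // ?divr_ge0 ?mulr_ge0 // ltW.
apply: (@quadratic_Lyapunov_UGAS _ _ F (ths, ths) Lyap_state ((4 * gamma)^-1) c2 c^-1).
- by rewrite invr_gt0 mulr_gt0.
- exact: c2_ge0.
- by rewrite invr_gt0.
- exact: continuous_Lyap_state.
- by move=> [th vth]; exact: sqr_norm_le_Lyap.
- by move=> [th vth]; exact: Lyap_le.
move=> t x x_der; have := is_derive_Lyap_state x_der.
case: (x t) => th vth Lyap_der.
exists (Lyap_dot (th - ths) (vth - ths) (F t (th, vth)).1 (F t (th, vth)).2) => //.
apply: le_trans (Lyap_dot_sysF_le t th vth) _.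
rewrite mulNr lerN2 ler_pdivrMl //.
have := Lyap_le_dissipation (ltW K_gt0) K_coercive (th - ths) (vth - ths).
by rewrite opprB addrA subrK.
Qed.

End ConcurrentLearningLyapunov.

Unset Implicit Arguments. Set Strict Implicit.
Local Close Scope classical_set_scope.

Theorem theorem3 (R : realType) (n N : nat) (ths : 'rV[R]_n)
    (phi : R -> 'rV[R]_n) (tk : 'I_N -> R) (beta gamma mu : R) :
  pw_continuous phi ->
  bounded_on_nonneg phi ->
  (forall k, 0 <= tk k) ->
  \rank (data_matrix phi tk) = n ->
  0 < beta -> 0 < gamma -> 0 < mu ->
  2 * gamma / mu <= beta ->
  UGAS (sysF phi tk ths beta gamma mu) (ths, ths).
Proof.
move=> _ _ _ rk beta_gt0 gamma_gt0 mu_gt0 gain.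
exact: sysF_UGAS.
Qed.
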